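(* Let $\Sigma$ be a two-letter alphabet, $\Gamma$ a finite alphabet, $h:\Sigma^*\to\Gamma^*$ an injective morphism and $w\in\Sigma^{\mathbb{N}}$ an infinite word. If there exist factors $f_1,f_2,f_3,\dots$ of $h(w)$ that are not synchronizing words of $h(\Sigma)$ and satisfy $\lim_{i\to\infty}|f_i| = \infty$, then $\mathrm{ACE}(h(w)) = \mathrm{ACE}(w) = \infty$.
   Context: For a finite set $X$ of finite words, a word $w$ is a synchronizing word of $X$ if $w = w_1w_2$ for some words $w_1,w_2$ such that for every $v\in X^*$ of the form $v = pws$, we have $pw_1\in X^*$ and $w_2s\in X^*$. $\mathrm{Fact}_n(w)$ is the set of length-$n$ factors of $w$. For a nonempty word $v$ and integer $p\ge0$, $v^{p/|v|}$ is the prefix of length $p$ of $vvv\cdots$. For a nonempty finite word $x$, $\mathrm{E}(x) = \sup\{ r \in \mathbb{Q} : x = v^r \text{ for some nonempty } v\}$. For an infinite word $w$, $\mathrm{ACE}(w) = \limsup_{n\to\infty}\sup\{\mathrm{E}(x) : x\in\mathrm{Fact}_n(w)\}$. *)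

From HB Require Import structures.
From mathcomp Require Import all_boot all_order all_algebra.
From mathcomp Require Import all_classical all_reals all_analysis.
From mathcomp Require Import Rstruct.
Set Implicit Arguments. Unset Strict Implicit. Unset Printing Implicit Defensive.
Import Order.TTheory GRing.Theory Num.Theory.
Local Open Scope classical_set_scope.
Local Open Scope ring_scope.

Notation Real := Rdefinitions.R.

(* The morphism h : Sigma^* -> Gamma^* with Sigma = bool (two letters),
   given by the images of the two letters. *)
Definition hmorph {G : Type} (hh : bool -> seq G) (u : seq bool) : seq G :=
  flatten (map hh u).

Definition pref {T : Type} (u : nat -> T) (n : nat) : seq T := mkseq u n.

Definition factor_of {T : eqType} (w : nat -> T) (x : seq T) : Prop :=
  exists m, infix x (pref w m).

(* Factors of the infinite word h(w): factors of the images of prefixes of w. *)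
Definition factor_of_image {G : eqType} (hh : bool -> seq G) (w : nat -> bool)
  (x : seq G) : Prop :=
  exists m, infix x (hmorph hh (pref w m)).

Definition in_star {G : eqType} (X : seq (seq G)) (v : seq G) : Prop :=
  exists ws : seq (seq G), (forall y, y \in ws -> y \in X) /\ flatten ws = v.

Definition synchronizing {G : eqType} (X : seq (seq G)) (w : seq G) : Prop :=
  exists w1 w2, w = w1 ++ w2 /\
    forall p s, in_star X (p ++ w ++ s) -> in_star X (p ++ w1) /\ in_star X (w2 ++ s).

(* v^{p/|v|}: the prefix of length p of vvv... *)
Definition fracpow {T : Type} (v : seq T) (p : nat) : seq T :=
  take p (flatten (nseq p v)).

Definition Exp {T : eqType} (x : seq T) : \bar Real :=
  ereal_sup [set e : \bar Real | exists (p : nat) (v : seq T),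
     [/\ (0 < size v)%N, x = fracpow v p & e = ((p%:R / (size v)%:R : Real)%:E)]].

Definition Fact_n {T : eqType} (F : seq T -> Prop) (n : nat) : set (seq T) :=
  [set x | F x /\ size x = n].

Definition ACE {T : eqType} (F : seq T -> Prop) : \bar Real :=
  limn_esup (fun n => ereal_sup [set Exp x | x in Fact_n F n]).

From HB Require Import structures.
From mathcomp Require Import all_boot all_order all_algebra.
From mathcomp Require Import all_classical all_reals all_analysis.
From mathcomp Require Import Rstruct zify.
Set Implicit Arguments. Unset Strict Implicit. Unset Printing Implicit Defensive.

(* Take a long non-synchronizing factor f of h(w), lying in the image of a prefix W of w.
   Since f is not synchronizing, it has a second factorization over {h(0), h(1)} which,
   on one side of a cut point of the factorization coming from W, shares no cut point
   with it; that side is still long. After conjugating h so that h(0) and h(1) start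
   with different letters (which shifts positions by less than |h(0)| + |h(1)|), two
   factorizations of the same word without common cut points determine each other letter
   by letter, through a residue that is a suffix of h(0) or h(1). There are only
   |h(0)| + |h(1)| residues, so the corresponding stretch of W is periodic with period at
   most |h(0)| + |h(1)|. Hence w contains K-th powers for every K, and so does h(w). *)

Section Words.
Variable T : Type.
Implicit Types s : seq T.

Lemma catsI s : injective (cat s).
Proof. by elim: s => //= a s IH x y [] /IH. Qed.

Lemma take_size_cat_add s1 s2 n : take (size s1 + n) (s1 ++ s2) = s1 ++ take n s2.
Proof. by rewrite take_cat ltnNge leq_addr /= addKn. Qed.

Lemma drop_size_cat_add s1 s2 n : drop (size s1 + n) (s1 ++ s2) = drop n s2.
Proof. by rewrite drop_cat ltnNge leq_addr /= addKn. Qed.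

Lemma drop_cat_leq s1 s2 n : n <= size s1 -> drop n (s1 ++ s2) = drop n s1 ++ s2.
Proof.
rewrite drop_cat leq_eqVlt => /orP[/eqP->|->] //.
by rewrite ltnn subnn drop0 drop_size.
Qed.

Lemma size_flatten_nseq K s : size (flatten (nseq K s)) = K * size s.
Proof. by elim: K => //= K IH; rewrite size_cat IH mulSn. Qed.

Lemma flatten_nseq_take_period (U : seq T) q (x0 : T) K :
  (forall t, q + t < size U -> nth x0 U t = nth x0 U (q + t)) ->
  K * q <= size U -> flatten (nseq K (take q U)) = take (K * q) U.
Proof.
elim: K U => [|K IH] U per HK; first by rewrite take0.
rewrite mulSn takeD /= -IH; first last.
- by rewrite size_drop; lia.
- move=> t; rewrite size_drop !nth_drop => Ht; apply: per; lia.
case: K {IH} HK => [|K] HK //; suff -> : take q (drop q U) = take q U by [].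
apply: (@eq_from_nth _ x0); rewrite !size_take size_drop; first by case: ifP; case: ifP; lia.
move=> t Ht; have tq : t < q by move: Ht; case: ifP; lia.
rewrite !nth_take // nth_drop -per //; move: HK; rewrite mulSn; lia.
Qed.

Lemma cat_lcp_conj s t m (x0 : T) :
  0 < size s -> m < size (s ++ t) -> take m (s ++ t) = take m (t ++ s) ->
  s ++ take m (s ++ t) = take m (s ++ t) ++ drop m (s ++ take m (s ++ t)) /\
  head x0 (drop m (s ++ take m (s ++ t))) = nth x0 (s ++ t) m.
Proof.
move=> s_gt0 m_lt E; set g := take m (s ++ t).
have Gs : take m.+1 (s ++ g) = take m.+1 (s ++ t).
  rewrite (_ : s ++ g = take (size s + m) ((s ++ t) ++ s)).
    by rewrite take_takel ?(takel_cat s m_lt) //; lia.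
  by rewrite /g E -catA take_size_cat_add.
split.
  by rewrite -{1}(cat_take_drop m (s ++ g)) -(take_takel _ (leqnSn m)) Gs take_takel.
by rewrite -nth0 nth_drop addn0 -(nth_take x0 (ltnSn m)) Gs nth_take.
Qed.

End Words.

Lemma head_cat_neq0 (T : eqType) (x0 : T) (s1 s2 : seq T) :
  s1 != [::] -> head x0 (s1 ++ s2) = head x0 s1.
Proof. by case: s1. Qed.

Section Morphism.
Variables (T : Type) (h : bool -> seq T).
Implicit Types U V W : seq bool.

Lemma hmorph_cat U V : hmorph h (U ++ V) = hmorph h U ++ hmorph h V.
Proof. by rewrite /hmorph map_cat flatten_cat. Qed.

Lemma hmorph_nil : hmorph h [::] = [::].
Proof. by []. Qed.

Lemma hmorph_cons a U : hmorph h (a :: U) = h a ++ hmorph h U.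
Proof. by []. Qed.

Lemma hmorph_flatten_nseq K U :
  hmorph h (flatten (nseq K U)) = flatten (nseq K (hmorph h U)).
Proof. by elim: K => //= K IH; rewrite hmorph_cat IH. Qed.

Definition hsize := size (h false) + size (h true).

Lemma size_hmorph_leq U : size (hmorph h U) <= size U * hsize.
Proof.
elim: U => //= a U IH; rewrite hmorph_cons size_cat mulSn leq_add //.
by case: a; rewrite /hsize; lia.
Qed.

(* The cut points of the factorization of [hmorph h W] into images of letters; for
   [k >= size W] the value stays at [size (hmorph h W)]. *)
Definition hcut W k := size (hmorph h (take k W)).

Lemma hcut0 W : hcut W 0 = 0.
Proof. by rewrite /hcut take0. Qed.

Lemma hcut_oversize W k : size W <= k -> hcut W k = size (hmorph h W).
Proof. by move=> le; rewrite /hcut take_oversize. Qed.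

Lemma hcutD W k i : hcut W (k + i) = hcut W k + hcut (drop k W) i.
Proof. by rewrite /hcut takeD hmorph_cat size_cat. Qed.

Lemma hcut_cons a W i : hcut (a :: W) i.+1 = size (h a) + hcut W i.
Proof. by rewrite /hcut /= hmorph_cons size_cat. Qed.

Lemma hcut_take W k i : hcut (take k W) i = hcut W (minn i k).
Proof. by rewrite /hcut take_min. Qed.

Lemma hcut_nth W l : l < size W -> hcut W l.+1 = hcut W l + size (h (nth false W l)).
Proof.
by move=> lt; rewrite /hcut (take_nth false lt) -cats1 hmorph_cat size_cat /hmorph /= cats0.
Qed.

Lemma hcut_leq_size W k : hcut W k <= size (hmorph h W).
Proof. by rewrite /hcut -{2}(cat_take_drop k W) hmorph_cat size_cat leq_addr. Qed.

Lemma hcut_mono W : {homo hcut W : k l / k <= l}.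
Proof. by move=> k l /subnKC <-; rewrite hcutD leq_addr. Qed.

Lemma hcutS W k : hcut W k.+1 <= hcut W k + hsize.
Proof.
case: (ltnP k (size W)) => lt; last by rewrite !hcut_oversize //; lia.
by rewrite hcut_nth // leq_add2l; case: (nth _ _ _); rewrite /hsize; lia.
Qed.

Lemma take_hmorph W k : take (hcut W k) (hmorph h W) = hmorph h (take k W).
Proof. by rewrite /hcut -{2}(cat_take_drop k W) hmorph_cat take_size_cat. Qed.

Lemma drop_hmorph W k : drop (hcut W k) (hmorph h W) = hmorph h (drop k W).
Proof. by rewrite /hcut -{2}(cat_take_drop k W) hmorph_cat drop_size_cat. Qed.

Lemma hcut_bracket W p : p <= size (hmorph h W) ->
  exists k, hcut W k <= p /\ (hcut W k = p \/ k < size W /\ p < hcut W k.+1).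
Proof.
move=> le; have ex : exists k, (k <= size W) && (hcut W k <= p) by exists 0; rewrite hcut0.
have ub k : (k <= size W) && (hcut W k <= p) -> k <= size W by case/andP.
case: (ex_maxnP ex ub) => k /andP[kW cut_le] kmax; exists k; split => //.
case: (ltnP k (size W)) => kW'; last by left; apply/eqP; rewrite eqn_leq cut_le hcut_oversize.
right; split => //; rewrite ltnNge; apply/negP => le'.
by have := kmax k.+1; rewrite kW' le' => /(_ isT); lia.
Qed.

Lemma hcut_floor W p : p <= size (hmorph h W) -> exists k, hcut W k <= p <= hcut W k + hsize.
Proof.
case/hcut_bracket => k [le [eq|[_ lt]]]; exists k; first by lia.
by have := hcutS W k; lia.
Qed.

Lemma hcut_ceil W p : p <= size (hmorph h W) -> exists k, p <= hcut W k <= p + hsize.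
Proof.
case/hcut_bracket => k [le [eq|[_ lt]]]; first by exists k; lia.
by exists k.+1; have := hcutS W k; lia.
Qed.

Lemma hcut_inside W p : p <= size (hmorph h W) -> (forall k, hcut W k != p) ->
  exists l, l < size W /\ hcut W l < p < hcut W l.+1.
Proof.
case/hcut_bracket => k [le [eq|[kW lt]]] ncut; first by have := ncut k; rewrite eq eqxx.
by exists k; rewrite kW lt ltn_neqAle le ncut.
Qed.

Lemma hmorph_nth W l : l < size W ->
  hmorph h W = hmorph h (take l W) ++ h (nth false W l) ++ hmorph h (drop l.+1 W).
Proof. by move=> lt; rewrite -hmorph_cons -drop_nth // -hmorph_cat cat_take_drop. Qed.

Lemma take_hmorph_inside W l p : l < size W -> hcut W l <= p <= hcut W l.+1 ->
  take p (hmorph h W) = hmorph h (take l W) ++ take (p - hcut W l) (h (nth false W l)).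
Proof.
move=> lt /andP[le1 le2]; have m_le : p - hcut W l <= size (h (nth false W l)).
  by move: le2; rewrite hcut_nth //; lia.
by rewrite {1}(hmorph_nth lt) -{1}(subnKC le1) take_size_cat_add takel_cat.
Qed.

Lemma drop_hmorph_inside W l p : l < size W -> hcut W l <= p <= hcut W l.+1 ->
  drop p (hmorph h W) = drop (p - hcut W l) (h (nth false W l)) ++ hmorph h (drop l.+1 W).
Proof.
move=> lt /andP[le1 le2]; have m_le : p - hcut W l <= size (h (nth false W l)).
  by move: le2; rewrite hcut_nth //; lia.
by rewrite {1}(hmorph_nth lt) -{1}(subnKC le1) drop_size_cat_add drop_cat_leq.
Qed.

Lemma hmorph_split_noncut W p : p <= size (hmorph h W) -> (forall k, hcut W k != p) ->
  exists l c m, [/\ 0 < m < size (h c),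
    take p (hmorph h W) = hmorph h (take l W) ++ take m (h c),
    drop p (hmorph h W) = drop m (h c) ++ hmorph h (drop l.+1 W)
    & hcut W l.+1 = p + size (drop m (h c))].
Proof.
move=> le ncut; have [l [lW /andP[lo hi]]] := hcut_inside le ncut.
have le' : hcut W l <= p <= hcut W l.+1 by rewrite (ltnW lo) (ltnW hi).
exists l, (nth false W l), (p - hcut W l).
rewrite size_drop (take_hmorph_inside lW le') (drop_hmorph_inside lW le').
by move: hi; rewrite !hcut_nth //; split => //; lia.
Qed.

Lemma hmorph_slice W A f B k k' a a' : hmorph h W = A ++ f ++ B -> k <= k' ->
  hcut W k = size A + a -> hcut W k' = size A + a' -> a' <= size f ->
  hmorph h (drop k (take k' W)) = drop a (take a' f).
Proof.
move=> EW le Ea Ea' a'_le.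
rewrite -drop_hmorph hcut_take (minn_idPl le) -take_hmorph EW Ea Ea'.
by rewrite take_size_cat_add takel_cat ?drop_size_cat_add.
Qed.

End Morphism.

Lemma infix_hmorph (T : eqType) (h : bool -> seq T) U W :
  infix U W -> infix (hmorph h U) (hmorph h W).
Proof.
case/infixP=> s [s' ->]; apply/infixP; exists (hmorph h s), (hmorph h s').
by rewrite !hmorph_cat.
Qed.

Lemma fracpow_flatten_nseq (T : Type) (v : seq T) K :
  0 < size v -> fracpow v (K * size v) = flatten (nseq K v).
Proof.
move=> v_gt0; have Kn : K <= K * size v by rewrite leq_pmulr.
by rewrite /fracpow -(subnKC Kn) nseqD flatten_cat take_size_cat // size_flatten_nseq subnKC.
Qed.

Section Decoding.
Variables (T : eqType) (d : T) (h : bool -> seq T).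
Hypothesis h_neq0 : forall b, h b != [::].
Hypothesis h_heads : head d (h false) != head d (h true).

Lemma hsize_gt0 : 0 < hsize h.
Proof. by have := h_neq0 false; rewrite -size_eq0 /hsize; lia. Qed.

Lemma h_head_inj a b : head d (h a) = head d (h b) -> a = b.
Proof. by case: a b => [] [] // E; move: h_heads; rewrite E eqxx. Qed.

Lemma head_hmorph_take P c m :
  0 < m -> head d (hmorph h P ++ take m (h c)) = head d (h (head c P)).
Proof.
case: P => [|a P] m_gt0 /=; last by rewrite hmorph_cons -catA head_cat_neq0.
by case: (h c) (h_neq0 c) => // x s _; case: m m_gt0.
Qed.

Lemma hmorph_take_inj P1 P2 c1 c2 m1 m2 :
  0 < m1 < size (h c1) -> 0 < m2 < size (h c2) ->
  hmorph h P1 ++ take m1 (h c1) = hmorph h P2 ++ take m2 (h c2) -> c1 = c2 /\ m1 = m2.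
Proof.
move=> /andP[m1_gt0 m1_lt] /andP[m2_gt0 m2_lt].
elim: P1 P2 => [|a P1 IH] [|b P2] E; have := congr1 (head d) E;
  rewrite !head_hmorph_take // => /h_head_inj /= eq_ab; subst.
- split=> //; have := congr1 size E.
  by rewrite (size_takel (ltnW m1_lt)) (size_takel (ltnW m2_lt)); lia.
- have := congr1 size E; rewrite hmorph_nil cat0s hmorph_cons !size_cat.
  by rewrite (size_takel (ltnW m1_lt)) (size_takel (ltnW m2_lt)) => ?; exfalso; lia.
- have := congr1 size E; rewrite hmorph_nil cat0s hmorph_cons !size_cat.
  by rewrite (size_takel (ltnW m1_lt)) (size_takel (ltnW m2_lt)) => ?; exfalso; lia.
- by move: E; rewrite !hmorph_cons -!catA => /catsI; apply: IH.
Qed.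

(* [r ++ h(V)] and [h(U) ++ e] are two factorizations of the same word, shifted by the
   nonempty [r], with no common cut point. *)
Definition disjoint_parse r U := r != [::] /\
  exists V e, r ++ hmorph h V = hmorph h U ++ e /\
    forall i j, hcut h U i != size r + hcut h V j.

Definition residue_step r a r' :=
  (size (h a) < size r /\ r = h a ++ r') \/
  exists P c m, [/\ 0 < m < size (h c), h a = r ++ hmorph h P ++ take m (h c)
    & r' = drop m (h c)].

Lemma residue_step_det r a r1 r2 : residue_step r a r1 -> residue_step r a r2 -> r1 = r2.
Proof.
case=> [[lt1 E1]|[P1 [c1 [m1 [H1 E1 ->]]]]] [[lt2 E2]|[P2 [c2 [m2 [H2 E2 ->]]]]].
- by apply: (@catsI _ (h a)); rewrite -E1 -E2.
- by move: lt1; rewrite E2 !size_cat; lia.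
- by move: lt2; rewrite E1 !size_cat; lia.
- by rewrite E1 in E2; case: (hmorph_take_inj H1 H2 (catsI E2)) => -> ->.
Qed.

Lemma disjoint_parse_head r a b U1 U2 :
  disjoint_parse r (a :: U1) -> disjoint_parse r (b :: U2) -> a = b.
Proof.
move=> [r_neq0 [V1 [e1 [E1 _]]]] [_ [V2 [e2 [E2 _]]]]; apply: h_head_inj.
move: (congr1 (head d) E1) (congr1 (head d) E2).
by rewrite !hmorph_cons -!catA !head_cat_neq0 // => <- <-.
Qed.

Lemma disjoint_parse_cons r a U : disjoint_parse r (a :: U) ->
  exists2 r', residue_step r a r' & disjoint_parse r' U.
Proof.
case=> r_neq0 [V [e [E D]]].
have E' : r ++ hmorph h V = h a ++ (hmorph h U ++ e) by rewrite E hmorph_cons catA.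
case: (ltngtP (size (h a)) (size r)) => [lt|gt|eq]; last first.
- by have := D 1 0; rewrite hcut_cons !hcut0 !addn0 eq eqxx.
- pose p := size (h a) - size r; have sa : size (h a) = size r + p by rewrite /p; lia.
  have p_le : p <= size (hmorph h V) by have := congr1 size E'; rewrite !size_cat; lia.
  have ncut l : hcut h V l != p.
    by apply: contra (D 1 l) => /eqP ->; rewrite hcut_cons hcut0 addn0 sa.
  have [l [c [m [Hm Etake Edrop Ecut]]]] := hmorph_split_noncut p_le ncut.
  exists (drop m (h c)); first right.
    by exists (take l V), c, m; rewrite -Etake -take_size_cat_add -sa E' take_size_cat.
  split; first by rewrite -size_eq0 size_drop; lia.
  exists (drop l.+1 V), e; split.
    by rewrite -Edrop -(drop_size_cat_add r) -sa E' drop_size_cat.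
  move=> i j; apply: contra (D i.+1 (l.+1 + j)) => /eqP Eij.
  by rewrite hcut_cons hcutD Ecut Eij; apply/eqP; lia.
- have Er : r = h a ++ drop (size (h a)) r.
    have := congr1 (take (size (h a))) E'; rewrite takel_cat ?take_size_cat //; last lia.
    by move=> Etake; rewrite -{1}(cat_take_drop (size (h a)) r) Etake.
  exists (drop (size (h a)) r); first by left.
  split; first by rewrite -size_eq0 size_drop; lia.
  exists V, e; split; first by apply: (@catsI _ (h a)); rewrite catA -Er E'.
  move=> i j; apply: contra (D i.+1 j) => /eqP Eij.
  by rewrite hcut_cons Eij size_drop; apply/eqP; lia.
Qed.

Lemma disjoint_parse_nth r U1 U2 t : disjoint_parse r U1 -> disjoint_parse r U2 ->
  t < size U1 -> t < size U2 -> nth false U1 t = nth false U2 t.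
Proof.
elim: t r U1 U2 => [|t IH] r [|a U1] [|b U2] //= D1 D2 lt1 lt2.
  exact: disjoint_parse_head D1 D2.
have eq_ab := disjoint_parse_head D1 D2; subst b.
have [r1 S1 D1'] := disjoint_parse_cons D1.
have [r2 S2 D2'] := disjoint_parse_cons D2.
rewrite (residue_step_det S1 S2) in D1'.
exact: IH D1' D2' lt1 lt2.
Qed.

Definition residues := [seq drop i (h false) | i <- iota 0 (size (h false))] ++
  [seq drop i (h true) | i <- iota 0 (size (h true))].

Lemma size_residues : size residues = hsize h.
Proof. by rewrite size_cat !size_map !size_iota. Qed.

Lemma residuesP r :
  reflect (exists c i, i < size (h c) /\ r = drop i (h c)) (r \in residues).
Proof.
apply: (iffP idP).
  rewrite mem_cat => /orP[] /mapP[i]; rewrite mem_iota => /andP[_ lt] ->.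
    by exists false, i.
  by exists true, i.
case=> c [i [lt ->]]; rewrite mem_cat; apply/orP.
by case: c lt => lt; [right | left]; apply/mapP; exists i; rewrite // mem_iota.
Qed.

Lemma residue_step_residues r a r' :
  residue_step r a r' -> r \in residues -> r' \in residues.
Proof.
case=> [[lt Er]|[P [c [m [Hm _ ->]]]]] rR; last by apply/residuesP; exists c, m; case/andP: Hm.
case/residuesP: rR => c [i [lt_i Eri]]; apply/residuesP; exists c, (size (h a) + i).
split; last by rewrite -drop_drop -Eri Er drop_size_cat.
by move: lt; rewrite Eri size_drop; lia.
Qed.

Lemma disjoint_parse_drop r U k : disjoint_parse r U -> r \in residues -> k <= size U ->
  exists2 r', r' \in residues & disjoint_parse r' (drop k U).
Proof.
move=> D rR; elim: k => [|k IH] lt; first by exists r; rewrite ?drop0.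
have [r1 r1R] := IH (ltnW lt); rewrite (drop_nth false lt) => /disjoint_parse_cons[r2 S2 D2].
by exists r2; first exact: residue_step_residues S2 r1R.
Qed.

(* Pigeonhole on the [hsize h] possible residues: two of the first [hsize h + 1]
   suffixes of [U] start with the same residue, and then they agree. *)
Lemma disjoint_parse_period r U : disjoint_parse r U -> r \in residues ->
  hsize h <= size U -> exists i j, i < j <= hsize h /\
    forall t, j + t < size U -> nth false U (i + t) = nth false U (j + t).
Proof.
move=> D rR UL.
pose P k r' := k <= hsize h -> r' \in residues /\ disjoint_parse r' (drop k U).
have [res resP] : {res : nat -> seq T & forall k, P k (res k)}.
  apply: choice => k; case: (leqP k (hsize h)) => [kL|Lk].
    by have [r' ? ?] := disjoint_parse_drop D rR (leq_trans kL UL); exists r'.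
  by exists [::]; rewrite /P leqNgt Lk.
have : ~~ uniq [seq res k | k <- iota 0 (hsize h).+1].
  apply/negP => /(@uniq_leq_size _ _ residues) le.
  suff sub : {subset [seq res k | k <- iota 0 (hsize h).+1] <= residues}.
    by have := le sub; rewrite size_map size_iota size_residues ltnn.
  by move=> x /mapP[k]; rewrite mem_iota => /andP[_ kL] ->; case: (resP k kL).
case/(uniqPn [::]) => i [j [ij]]; rewrite size_map size_iota => jL.
rewrite !(nth_map 0) ?size_iota ?nth_iota ?add0n //; try lia; move=> Eij.
exists i, j; split; first lia.
move=> t lt; have [_ Di] := resP i (ltac:(lia)); have [_ Dj] := resP j (ltac:(lia)).
rewrite Eij in Di; rewrite -!nth_drop.
by apply: disjoint_parse_nth Di Dj _ _; rewrite size_drop; lia.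
Qed.

Lemma disjoint_parse_power r U K : disjoint_parse r U -> r \in residues ->
  K.+1 * hsize h <= size U -> exists2 v, v != [::] & infix (flatten (nseq K v)) U.
Proof.
move=> D rR UL.
have [i [j [/andP[ij jL] per]]] :=
  disjoint_parse_period D rR (leq_trans (leq_pmull _ (ltn0Sn K)) UL).
pose q := j - i; have q_gt0 : 0 < q by rewrite /q; lia.
have perU : forall t, q + t < size (drop i U) ->
    nth false (drop i U) t = nth false (drop i U) (q + t).
  move=> t; rewrite size_drop !nth_drop => lt.
  by rewrite (_ : i + (q + t) = j + t); [apply: per | rewrite /q]; lia.
have KqU : K * q <= size (drop i U).
  have : K * q <= K * hsize h by rewrite leq_mul2l /q; lia.
  by move: UL; rewrite size_drop mulSn; lia.
exists (take q (drop i U)).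
  have qU : q <= size U - i by move: UL; rewrite mulSn /q; lia.
  by rewrite -size_eq0 size_takel -?lt0n // size_drop.
rewrite (flatten_nseq_take_period perU KqU).
exact: infix_trans (infix_take _ _) (infix_drop _ _).
Qed.

(* Trimming [z] to images of whole letters of [W] loses at most [2 * hsize h] letters; the
   rest is the image of at least [K.+1 * hsize h] letters. *)
Lemma disjoint_cuts_power W V A B P S z K :
  hmorph h W = A ++ z ++ B -> hmorph h V = P ++ z ++ S ->
  (forall k l a, a <= size z -> hcut h W k = size A + a -> hcut h V l = size P + a -> False) ->
  K.+1 * hsize h * hsize h + 2 * hsize h <= size z ->
  exists2 v, v != [::] & infix (flatten (nseq K v)) W.
Proof.
move=> EW EV nocommon zL; have L_gt0 := hsize_gt0.
have X_gt0 : 0 < K.+1 * hsize h * hsize h by rewrite !muln_gt0 L_gt0.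
have sW : size (hmorph h W) = size A + size z + size B by rewrite EW !size_cat addnA.
have [k0 /andP[k0_lo k0_hi]] : exists k, size A <= hcut h W k <= size A + hsize h.
  by apply: hcut_ceil; rewrite sW; lia.
have [k1 /andP[k1_lo k1_hi]] :
    exists k, hcut h W k <= size A + size z <= hcut h W k + hsize h.
  by apply: hcut_floor; rewrite sW; lia.
have k01 : k0 <= k1 by rewrite leqNgt; apply/negP => /ltnW/(hcut_mono h W); lia.
pose a0 := hcut h W k0 - size A; pose a1 := hcut h W k1 - size A.
have Ea0 : hcut h W k0 = size A + a0 by rewrite /a0; lia.
have Ea1 : hcut h W k1 = size A + a1 by rewrite /a1; lia.
pose U := drop k0 (take k1 W).
have EU : drop a0 z = hmorph h U ++ drop a1 z.
  rewrite (hmorph_slice EW k01 Ea0 Ea1); last lia.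
  by rewrite -{1}(cat_take_drop a1 z) drop_cat_leq // size_takel; lia.
have cutU i : hcut h W (minn (k0 + i) k1) = size A + a0 + hcut h U i.
  by rewrite -hcut_take hcutD hcut_take (minn_idPl k01) Ea0.
have sU : size (hmorph h U) = a1 - a0.
  by have := congr1 size EU; rewrite size_cat !size_drop; lia.
have ncut l : hcut h V l != size P + a0.
  by apply/eqP => E; apply: (nocommon k0 l a0) => //; lia.
have p_le : size P + a0 <= size (hmorph h V) by rewrite EV !size_cat; lia.
have [l [c [m [Hm _ Edrop Ecut]]]] := hmorph_split_noncut p_le ncut.
have D : disjoint_parse (drop m (h c)) U.
  split; first by rewrite -size_eq0 size_drop; lia.
  exists (drop l.+1 V), (drop a1 z ++ S); split.
    by rewrite -Edrop EV drop_size_cat_add drop_cat_leq ?EU ?catA //; lia.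
  move=> i j; apply/eqP => Eij.
  apply: (nocommon (minn (k0 + i) k1) (l.+1 + j) (a0 + hcut h U i)).
  - by have := hcut_leq_size h U i; lia.
  - by rewrite cutU addnA.
  - by rewrite hcutD Ecut Eij; lia.
have UL : K.+1 * hsize h <= size U.
  rewrite -(leq_pmul2r L_gt0); apply: leq_trans (size_hmorph_leq h U); rewrite sU; lia.
have r0R : drop m (h c) \in residues by apply/residuesP; exists c, m; case/andP: Hm.
have [v v_neq0 vK] := disjoint_parse_power D r0R UL.
by exists v => //; apply: infix_trans vK (infix_trans (infix_drop _ _) (infix_take _ _)).
Qed.

End Decoding.

Lemma conjugate_distinct_heads (T : eqType) (d : T) (x y : seq T) :
  x != [::] -> y != [::] -> x ++ y != y ++ x ->
  exists g, [/\ size g < size x + size y,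
    x ++ g = g ++ drop (size g) (x ++ g), y ++ g = g ++ drop (size g) (y ++ g) &
    head d (drop (size g) (x ++ g)) != head d (drop (size g) (y ++ g))].
Proof.
rewrite -!size_eq0 -!lt0n => x_gt0 y_gt0 xy.
have syx : size (y ++ x) = size (x ++ y) by rewrite !size_cat addnC.
pose P m := (m <= size (x ++ y)) && (take m (x ++ y) == take m (y ++ x)).
have P0 : P 0 by rewrite /P !take0 eqxx.
have ub m : P m -> m <= size (x ++ y) by case/andP.
case: (ex_maxnP (ex_intro P 0 P0) ub) => m /andP[m_le /eqP Em] m_max.
have m_lt : m < size (x ++ y).
  rewrite ltn_neqAle m_le andbT; apply: contra xy => /eqP m_eq.
  by move: Em; rewrite m_eq take_size -syx take_size => ->.
have [Ex hx] := cat_lcp_conj d x_gt0 m_lt Em.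
have m_lt' : m < size (y ++ x) by rewrite syx.
have [Ey hy] := cat_lcp_conj d y_gt0 m_lt' (esym Em).
rewrite -Em in Ey hy.
have sg : size (take m (x ++ y)) = m by rewrite size_takel // ltnW.
exists (take m (x ++ y)); rewrite sg; split=> //; first by rewrite -size_cat.
rewrite hx hy; apply/negP => /eqP nth_eq; have := m_max m.+1.
by rewrite /P m_lt !(take_nth d) ?syx // Em nth_eq eqxx => /(_ isT); rewrite ltnn.
Qed.

Lemma hmorph_conj (T : Type) (h h' : bool -> seq T) g :
  (forall b, h b ++ g = g ++ h' b) -> forall W, hmorph h W ++ g = g ++ hmorph h' W.
Proof.
move=> E; elim=> [|a W IH]; first by rewrite hmorph_nil cats0.
by rewrite !hmorph_cons -catA IH catA E catA.
Qed.

Lemma hcut_eq_size (T T' : Type) (h : bool -> seq T) (h' : bool -> seq T') W k :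
  (forall b, size (h' b) = size (h b)) -> hcut h' W k = hcut h W k.
Proof.
move=> E; rewrite /hcut; elim: (take k W) => [|a U IH] //.
by rewrite !hmorph_cons !size_cat IH E.
Qed.

Lemma hmorph_inj_neq0 (T : eqType) (h : bool -> seq T) :
  injective (hmorph h) -> forall b, h b != [::].
Proof.
move=> inj b; apply/eqP => E.
by have /inj : hmorph h [:: b] = hmorph h [::] by rewrite /hmorph /= E.
Qed.

Lemma hmorph_inj_noncomm (T : eqType) (h : bool -> seq T) :
  injective (hmorph h) -> h false ++ h true != h true ++ h false.
Proof.
move=> inj; apply/eqP => E.
have E' : hmorph h [:: false; true] = hmorph h [:: true; false] by rewrite /hmorph /= !cats0.
by have := inj _ _ E'.
Qed.

(* Conjugating [h] by the longest common prefix [g] of [h false ++ h true] and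
   [h true ++ h false] gives a morphism whose two images start with different letters;
   the shift costs [size g < hsize h] letters of [z]. *)
Lemma disjoint_cuts_power_inj (T : eqType) (h : bool -> seq T) W V A B P S z K :
  injective (hmorph h) ->
  hmorph h W = A ++ z ++ B -> hmorph h V = P ++ z ++ S ->
  (forall k l a, a <= size z -> hcut h W k = size A + a -> hcut h V l = size P + a -> False) ->
  K.+1 * hsize h * hsize h + 3 * hsize h <= size z ->
  exists2 v, v != [::] & infix (flatten (nseq K v)) W.
Proof.
move=> inj EW EV nocommon zL; have h_neq0 := hmorph_inj_neq0 inj.
have [d _] : exists d : T, True by case: (h false) (h_neq0 false) => // d; exists d.
have [g [gL Egx Egy heads]] :=
  conjugate_distinct_heads d (h_neq0 false) (h_neq0 true) (hmorph_inj_noncomm inj).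
pose h' b := drop (size g) (h b ++ g).
have Eg b : h b ++ g = g ++ h' b by case: b.
have size_h' b : size (h' b) = size (h b) by rewrite size_drop size_cat addnK.
have cut' U k : hcut h' U k = hcut h U k := hcut_eq_size U k size_h'.
have gz : size g <= size z by move: gL zL; rewrite /hsize; lia.
have shift U A0 B0 : hmorph h U = A0 ++ z ++ B0 ->
    hmorph h' U = drop (size g) (A0 ++ take (size g) z) ++ drop (size g) z ++ B0 ++ g.
  move=> EU; rewrite -(drop_size_cat (hmorph h' U) (erefl (size g))) -(hmorph_conj Eg) EU.
  rewrite -{1}(cat_take_drop (size g) z) -!catA catA drop_cat_leq //.
  by rewrite size_cat size_takel; lia.
apply: (disjoint_cuts_power (d := d) (h := h') _ _ (shift _ _ _ EW) (shift _ _ _ EV)).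
- by move=> b; rewrite -size_eq0 size_h' size_eq0.
- by rewrite /h' /=.
- move=> k l a; rewrite !size_drop !size_cat !size_takel // !cut' => a_le.
  by rewrite !addnK; apply: nocommon; lia.
- by rewrite /hsize !size_h' size_drop; move: gL zL; rewrite /hsize; lia.
Qed.

Section Synchronization.
Variables (T : eqType) (h : bool -> seq T).

Lemma in_star_hmorphP v :
  in_star [:: h false; h true] v <-> exists U, hmorph h U = v.
Proof.
split=> [[ws [ws_sub <-]]|[U <-]].
  exists (map (fun y => y == h true) ws); rewrite /hmorph -map_comp.
  congr flatten; apply: map_id_in => y /ws_sub; rewrite !inE /=.
  by case/orP=> /eqP ->; [case: eqP => // <- | rewrite eqxx].
exists (map h U); split=> // y /mapP[[] _ ->]; rewrite !inE eqxx ?orbT //.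
Qed.

Lemma in_star_hmorph U : in_star [:: h false; h true] (hmorph h U).
Proof. by apply/in_star_hmorphP; exists U. Qed.

Lemma nonsync_disjoint_cuts W A f B k c :
  hmorph h W = A ++ f ++ B -> hcut h W k = size A + c -> c <= size f ->
  ~ synchronizing [:: h false; h true] f ->
  exists V P S, hmorph h V = P ++ f ++ S /\
   ((forall k' l a, a <= c -> hcut h W k' = size A + a -> hcut h V l = size P + a -> False) \/
    (forall k' l a, c <= a <= size f ->
       hcut h W k' = size A + a -> hcut h V l = size P + a -> False)).
Proof.
move=> EW Ec cf nsync.
have [P [S [inPS not_split]]] : exists P S, in_star [:: h false; h true] (P ++ f ++ S) /\
    ~ (in_star [:: h false; h true] (P ++ take c f) /\
       in_star [:: h false; h true] (drop c f ++ S)).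
  apply: contrapT => H; apply: nsync; exists (take c f), (drop c f).
  split=> [|P S PS]; first by rewrite cat_take_drop.
  by apply: contrapT => H'; apply: H; exists P, S.
have [V EV] := (in_star_hmorphP _).1 inPS.
exists V, P, S; split => //.
case: (pselect (exists k1 l1 a1, [/\ a1 <= c, hcut h W k1 = size A + a1
    & hcut h V l1 = size P + a1])) => [[k1 [l1 [a1 [a1c E1 F1]]]]|]; last first.
  by move=> N; left=> k' l a ac E F; apply: N; exists k', l, a.
case: (pselect (exists k2 l2 a2, [/\ c <= a2 <= size f, hcut h W k2 = size A + a2
    & hcut h V l2 = size P + a2])) => [[k2 [l2 [a2 [a2c E2 F2]]]]|]; last first.
  by move=> N; right=> k' l a ac E F; apply: N; exists k', l, a.
exfalso; apply: not_split; split.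
- have E1' : hcut h W (minn k1 k) = size A + a1.
    case: (leqP k1 k) => [//|lt].
    by have := hcut_mono h W (ltnW lt); lia.
  rewrite -(cat_take_drop a1 (take c f)) take_takel // catA.
  rewrite -(hmorph_slice EW (geq_minr k1 k) E1' Ec cf).
  rewrite (_ : P ++ take a1 f = hmorph h (take l1 V)) -?hmorph_cat.
    exact: in_star_hmorph.
  by rewrite -take_hmorph F1 EV take_size_cat_add takel_cat //; lia.
- have E2' : hcut h W (maxn k k2) = size A + a2.
    case: (leqP k k2) => [//|lt].
    by have := hcut_mono h W (ltnW lt); lia.
  rewrite -(cat_take_drop a2 f) drop_cat_leq ?size_takel; try lia.
  rewrite -catA -(hmorph_slice EW (leq_maxl k k2) Ec E2'); last lia.
  rewrite (_ : drop a2 f ++ S = hmorph h (drop l2 V)) -?hmorph_cat.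
    exact: in_star_hmorph.
  by rewrite -drop_hmorph F2 EV drop_size_cat_add drop_cat_leq //; lia.
Qed.

End Synchronization.

Lemma factor_powers (Gamma : finType) (hh : bool -> seq Gamma) (w : nat -> bool) :
  injective (hmorph hh) ->
  (exists f : nat -> seq Gamma,
     (forall i, factor_of_image hh w (f i)) /\
     (forall i, ~ synchronizing [:: hh false; hh true] (f i)) /\
     (forall M : nat, exists N : nat, forall i, N <= i -> M <= size (f i))) ->
  forall K, exists2 v, v != [::] & factor_of w (flatten (nseq K v)).
Proof.
move=> inj [f [f_fact [f_nsync f_long]]] K.
pose L := hsize hh; pose N := K.+1 * L * L + 3 * L.
have [i /(_ i (leqnn i)) fL] := f_long (2 * N + L).
have [m /infixP[A [B EW]]] := f_fact i.
have sW : size (hmorph hh (pref w m)) = size A + size (f i) + size B.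
  by rewrite EW !size_cat addnA.
have [k /andP[k_lo k_hi]] : exists k, size A + N <= hcut hh (pref w m) k <= size A + N + L.
  by apply: hcut_ceil; rewrite sW; lia.
(* The cut [c] lies in [N, N + L], so [take c (f i)] and [drop c (f i)] both have
   length at least [N]. *)
pose c := hcut hh (pref w m) k - size A.
have Ec : hcut hh (pref w m) k = size A + c by rewrite /c; lia.
have cf : c <= size (f i) by rewrite /c; lia.
suff [v v_neq0 vK] : exists2 v, v != [::] & infix (flatten (nseq K v)) (pref w m).
  by exists v => //; exists m.
have [V [P [S [EV [Dl|Dr]]]]] := nonsync_disjoint_cuts EW Ec cf (f_nsync i).
- apply: (@disjoint_cuts_power_inj _ hh _ V A (drop c (f i) ++ B) P (drop c (f i) ++ S)
    (take c (f i))).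
  + exact: inj.
  + by rewrite EW [take c _ ++ _]catA cat_take_drop.
  + by rewrite EV [take c _ ++ _]catA cat_take_drop.
  + by move=> k' l a; rewrite size_takel //; apply: Dl.
  + by rewrite size_takel // -/L -/N /c; lia.
- apply: (@disjoint_cuts_power_inj _ hh _ V (A ++ take c (f i)) B (P ++ take c (f i)) S
    (drop c (f i))).
  + exact: inj.
  + by rewrite EW -catA [take c _ ++ _]catA cat_take_drop.
  + by rewrite EV -catA [take c _ ++ _]catA cat_take_drop.
  + move=> k' l a; rewrite size_drop !size_cat size_takel // => a_le E F.
    by rewrite leq_subRL // in a_le; apply: (Dr k' l (c + a)); rewrite ?addnA ?leq_addr.
  + by rewrite size_drop; apply: leq_trans (leq_sub2r c fL); rewrite -/L -/N /c; lia.
Qed.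

Import Order.TTheory GRing.Theory Num.Theory.
Local Open Scope ring_scope.

Lemma Exp_flatten_nseq (T : eqType) (v : seq T) K :
  v != [::] -> ((K%:R : Rdefinitions.R)%:E <= Exp (flatten (nseq K v)))%E.
Proof.
rewrite -size_eq0 -lt0n => v_gt0; apply: ereal_sup_ubound.
exists (K * size v)%N, v; split=> //; first by rewrite fracpow_flatten_nseq.
by rewrite natrM mulfK // pnatr_eq0 -lt0n.
Qed.

Lemma ACE_powers (T : eqType) (F : seq T -> Prop) :
  (forall K, exists2 v, v != [::] & F (flatten (nseq K v))) -> ACE F = +oo%E.
Proof.
move=> powers; rewrite /ACE limn_esup_lim; set u := (fun n => _).
suff -> : esups u = (fun=> +oo%E) by exact: lim_cst.
apply/funext => n; apply: eq_infty => r.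
pose K := (n + (Num.truncn r).+1)%N; have [v v_neq0 Fv] := powers K.
pose x := flatten (nseq K v).
have n_le : (n <= size x)%N.
  by rewrite size_flatten_nseq -[X in (X <= _)%N]muln1 leq_mul // ?leq_addr // lt0n size_eq0.
apply: (@le_trans _ _ (Exp x)).
  apply: le_trans (Exp_flatten_nseq K v_neq0).
  by rewrite lee_fin (le_trans (ltW (truncnS_gt r))) // ler_nat leq_addl.
apply: (@le_trans _ _ (u (size x))); apply: ereal_sup_ubound; first by exists x.
by exists (size x).
Qed.

Theorem lemma29 (Gamma : finType) (hh : bool -> seq Gamma) (w : nat -> bool) :
  injective (hmorph hh) ->
  (exists f : nat -> seq Gamma,
     (forall i, factor_of_image hh w (f i)) /\
     (forall i, ~ synchronizing [:: hh false; hh true] (f i)) /\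
     (forall M : nat, exists N : nat, forall i, (N <= i)%N -> (M <= size (f i))%N)) ->
  ACE (factor_of_image hh w) = +oo%E /\ ACE (factor_of w) = +oo%E.
Proof.
move=> inj Hf; have powers := factor_powers inj Hf.
split; apply: ACE_powers => K; have [v v_neq0 [m vK]] := powers K; last first.
  by exists v => //; exists m.
exists (hmorph hh v).
  by apply: contra v_neq0 => /eqP E; apply/eqP/inj; rewrite E.
by exists m; rewrite -hmorph_flatten_nseq; apply: infix_hmorph.
Qed.
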